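(* Let $(\mathcal C,S,T)$ be a finite basic association schemoid whose underlying category is a connected groupoid with $T(f)=f^{-1}$, let $H:\mathcal C\to\mathbb K\text{-Mod}$ be a functor such that $D=\pi^*p^*H$ has all $D_g$ finite abelian groups, let $D_+\to\mathcal E\xrightarrow{q}\mathcal C$ be a linear extension and $(\mathcal E,\widetilde S)$ with $\widetilde S=\{q^{-1}(\sigma)\}_{\sigma\in S}$ the associated schemoid extension, and let $\mathbb K$ be a field. Then the algebra map $\mathbb K(q):\mathbb K(\mathcal E,\widetilde S)\to\mathbb K(\mathcal C,S)$, $s_{\tilde\pi}\mapsto n^q_{\tilde\pi}s_{q(\tilde\pi)}=\#D_g\, s_{q(\tilde\pi)}$, is an isomorphism if and only if the characteristic of $\mathbb K$ does not divide $\#D_g$ for any morphism $g$ of $\mathcal C$; if the characteristic divides $\#D_g$ for some $g$, then $\mathbb K(q)$ is the zero map.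
   Context: Write $s(f),t(f)$ for source and target. A quasi-schemoid is a pair $(\mathcal C,S)$ with $\mathcal C$ a small category and $S$ a partition of $mor(\mathcal C)$ into nonempty blocks such that for all $\sigma,\tau,\mu\in S$ and $f,g\in\mu$ the sets $\{(a,b)\in\sigma\times\tau: s(a)=t(b), a\circ b=f\}$ and the analogous set for $g$ have equal cardinality. An association schemoid is a triple $(\mathcal C,S,T)$ with $(\mathcal C,S)$ a quasi-schemoid, every block containing an endomorphism consisting only of endomorphisms, and $T$ a contravariant endofunctor with $T^2=\mathrm{id}$ and $\{T(f):f\in\sigma\}\in S$. It is finite if $mor(\mathcal C)$ is finite, unital if every block meeting $\{1_x\}$ lies in $\{1_x\}$, basic if unital with $\mathcal C$ a groupoid. The category $F(\mathcal C)$ has objects the morphisms of $\mathcal C$ and morphisms $f\to g$ the pairs $(\alpha,\beta)$ with $g=\alpha f\beta$; a natural system is a functor $D:F(\mathcal C)\to\mathbb K\text{-Mod}$, $f_*=D(f,1)$, $g^*=D(1,g)$; $D=\pi^*p^*H$ means $D_f=H(t(f))$, $D(\alpha,\beta)=H(\alpha)$. A linear extension $D_+\to\mathcal E\xrightarrow{q}\mathcal C$ consists of a category $\mathcal E$ with the same objects and a full functor $q$ that is the identity on objects, such that each $D_f$ acts transitively and freely on $q^{-1}(f)$ and $(f_0+\alpha)(g_0+\beta)=f_0g_0+f_*\beta+g^*\alpha$. The category algebra $\mathbb K\mathcal C$ is the free $\mathbb K$-module on $mor(\mathcal C)$ with product $a\cdot b=a\circ b$ if composable and $0$ otherwise; $s_\sigma=\sum_{f\in\sigma}f$;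 the schemoid algebra $\mathbb K(\mathcal C,S)$ is the span of the $s_\sigma$. $q(\tilde\pi)$ denotes the block of $S$ containing $q(\tilde\pi)$, and $n^q_{\tilde\pi}$ is the number of $f\in\tilde\pi$ with $t(f)=x$ and $q(f)=g$ (for any $x$ and $g\in q(\tilde\pi)$ with $t(g)=x$), which equals $\#D_g$ (constant since $\mathcal C$ is connected). *)

From HB Require Import structures.
From mathcomp Require Import all_boot all_order all_algebra.
Set Implicit Arguments. Unset Strict Implicit. Unset Printing Implicit Defensive.
Import GRing.Theory.
Local Open Scope ring_scope.

Definition is_category (O M : finType) (src tgt : M -> O) (id : O -> M)
    (comp : M -> M -> M) : Prop :=
  [/\ forall x, src (id x) = x /\ tgt (id x) = x,
      forall f g, src f = tgt g -> src (comp f g) = src g /\ tgt (comp f g) = tgt f,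
      forall f, comp f (id (src f)) = f /\ comp (id (tgt f)) f = f &
      forall f g h, src f = tgt g -> src g = tgt h ->
        comp f (comp g h) = comp (comp f g) h].

Definition is_groupoid_inv (O M : finType) (src tgt : M -> O) (id : O -> M)
    (comp : M -> M -> M) (inv : M -> M) : Prop :=
  forall f, [/\ src (inv f) = tgt f, tgt (inv f) = src f,
                comp f (inv f) = id (tgt f) & comp (inv f) f = id (src f)].

Definition cat_connected (O M : finType) (src tgt : M -> O) : Prop :=
  forall x y : O,
    connect (fun a b : O => [exists f : M, ((src f == a) && (tgt f == b))
                                       || ((src f == b) && (tgt f == a))]) x y.

Definition nfact (O M : finType) (src tgt : M -> O) (comp : M -> M -> M)
    (sig tau : {set M}) (f : M) : nat :=
  #|[set ab : M * M | [&& ab.1 \in sig, ab.2 \in tau, src ab.1 == tgt ab.2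
                          & comp ab.1 ab.2 == f]]|.

Definition is_quasi_schemoid (O M : finType) (src tgt : M -> O)
    (comp : M -> M -> M) (S : {set {set M}}) : Prop :=
  partition S [set: M] /\
  forall sig tau mu, sig \in S -> tau \in S -> mu \in S ->
    forall f g, f \in mu -> g \in mu ->
      nfact src tgt comp sig tau f = nfact src tgt comp sig tau g.

Definition is_association_schemoid (O M : finType) (src tgt : M -> O)
    (id : O -> M) (comp : M -> M -> M) (S : {set {set M}})
    (Tob : O -> O) (Tmor : M -> M) : Prop :=
  [/\ is_quasi_schemoid src tgt comp S,
      forall sig, sig \in S -> (exists2 f, f \in sig & src f = tgt f) ->
        forall f, f \in sig -> src f = tgt f,
      [/\ (forall f, src (Tmor f) = Tob (tgt f) /\ tgt (Tmor f) = Tob (src f)),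
          (forall x, Tmor (id x) = id (Tob x)) &
          (forall f g, src f = tgt g -> Tmor (comp f g) = comp (Tmor g) (Tmor f))],
      ((forall x, Tob (Tob x) = x) /\ (forall f, Tmor (Tmor f) = f)) &
      forall sig, sig \in S -> Tmor @: sig \in S].

Definition is_unital (O M : finType) (id : O -> M) (S : {set {set M}}) : Prop :=
  forall sig, sig \in S -> forall x, id x \in sig -> sig \subset [set id x].

(* Category algebra K C realized as {ffun M -> K} (coefficients on morphisms);
   s_sigma and the schemoid algebra (span of the s_sigma). *)
Definition sblock (K : fieldType) (M : finType) (sig : {set M}) : {ffun M -> K} :=
  [ffun f => (f \in sig)%:R].

Definition in_schemoid_alg (K : fieldType) (M : finType) (S : {set {set M}})
    (v : {ffun M -> K}) : Prop :=
  exists c : {set M} -> K,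
    v = \sum_(sig in S) [ffun f => c sig * sblock K sig f].

Definition Kmap (K : fieldType) (ME M : finType) (q : ME -> M)
    (v : {ffun ME -> K}) : {ffun M -> K} :=
  [ffun g => \sum_(e : ME | q e == g) v e].

Definition Stilde (ME M : finType) (q : ME -> M) (S : {set {set M}})
    : {set {set ME}} := [set q @^-1: sig | sig : {set M} in S].

(* Every fibre q^-1(g) is a torsor under D_g = H (tgt g), and all the D_g have
   the same order n, since H sends the morphisms of the connected groupoid C to
   bijections.  A block q^-1(sigma) of S~ is a union of such fibres, so K(q)
   maps s_(q^-1(sigma)) to n s_sigma: on the schemoid algebras K(q) is n times
   a bijection, hence an isomorphism when n != 0 in K and zero otherwise, and
   n = 0 in K exactly when char K divides n. *)

From HB Require Import structures.
From mathcomp Require Import all_boot all_order all_algebra.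
Import GRing.Theory.
Set Implicit Arguments.
Unset Strict Implicit.
Unset Printing Implicit Defensive.

Local Open Scope ring_scope.

Lemma natf_neq0_pcharP (R : idomainType) (n : nat) : (0 < n)%N ->
  reflect (forall p, p \in [pchar R] -> ~~ (p %| n)%N) (n%:R != 0 :> R).
Proof.
move=> n_gt0; apply: (iffP idP) => [nR_neq0 p charRp | ndvd].
  by rewrite (dvdn_pcharf charRp).
apply: contraT; rewrite negbK => nR0.
have [p charRp] := natf0_pchar n_gt0 nR0.
by have := ndvd p charRp; rewrite (dvdn_pcharf charRp) nR0.
Qed.

Lemma imset_preimset (aT rT : finType) (f : aT -> rT) (A : {set rT}) :
  (forall y, exists x, f x = y) -> f @: (f @^-1: A) = A.
Proof.
move=> f_surj; apply/setP => y; apply/imsetP/idP => [[x] | Ay].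
  by rewrite inE => Afx ->.
by have [x fx] := f_surj y; exists x; rewrite ?inE fx.
Qed.

Lemma preimset_inj (aT rT : finType) (f : aT -> rT) :
  (forall y, exists x, f x = y) -> injective (fun A : {set rT} => f @^-1: A).
Proof.
by move=> f_surj A B /= eqAB; rewrite -(imset_preimset A f_surj) eqAB imset_preimset.
Qed.

Section GroupoidFunctor.

Variables (O M : finType) (src tgt : M -> O) (id : O -> M) (comp : M -> M -> M).
Variables (inv : M -> M) (H : O -> finType) (Hmap : forall x y : O, M -> H x -> H y).
Hypothesis Cgrp : is_groupoid_inv src tgt id comp inv.
Hypothesis Hid : forall x (u : H x), @Hmap x x (id x) u = u.
Hypothesis Hcomp : forall f g, src f = tgt g -> forall u : H (src g),
  @Hmap (src g) (tgt f) (comp f g) u = @Hmap (tgt g) (tgt f) f (@Hmap (src g) (tgt g) g u).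

Lemma Hmap_inj f : injective (@Hmap (src f) (tgt f) f).
Proof.
have [src_inv tgt_inv _ inv_f_f] := Cgrp f.
have := Hcomp src_inv; rewrite inv_f_f.
(* [tgt (inv f)] is only propositionally [src f]: generalize before rewriting. *)
move: (@Hmap (tgt f)) => Hf; move: (tgt (inv f)) tgt_inv Hf => y -> Hf HinvK u v eq_uv.
by rewrite -(Hid u) -(Hid v) !HinvK eq_uv.
Qed.

Lemma card_Hmap f : #|H (src f)| = #|H (tgt f)|.
Proof.
have [src_inv tgt_inv _ _] := Cgrp f.
apply/eqP; rewrite eqn_leq (leq_card _ (@Hmap_inj f)) /=.
by have := leq_card _ (@Hmap_inj (inv f)); rewrite src_inv tgt_inv.
Qed.

Lemma card_H_connected : cat_connected src tgt -> forall x y, #|H x| = #|H y|.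
Proof.
move=> Cconn x y; have /connectP [p xp ->] := Cconn x y.
elim: p x xp => [|z p IHp] x //= /andP [/existsP [f xz] zp].
rewrite -(IHp z zp).
by case/orP: xz => /andP [/eqP <- /eqP <-]; rewrite card_Hmap.
Qed.

End GroupoidFunctor.

Lemma card_fibre_regular (O M ME : finType) (tgt : M -> O) (q : ME -> M)
    (D : O -> finType) (act : forall x : O, D x -> ME -> ME) :
  (forall e (a : D (tgt (q e))), q (act (tgt (q e)) a e) = q e) ->
  (forall e e', q e = q e' -> exists! a : D (tgt (q e)), act (tgt (q e)) a e = e') ->
  forall e, #|[pred e' | q e' == q e]| = #|D (tgt (q e))|.
Proof.
move=> actq actreg e.
have act_inj : injective (act (tgt (q e)) ^~ e).
  move=> a b eq_ab; have [c [_ c_uniq]] := actreg e _ (esym (actq e a)).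
  by rewrite -(c_uniq a) // -(c_uniq b).
have fibreE : [pred e' | q e' == q e] =i [set act (tgt (q e)) a e | a in D (tgt (q e))].
  move=> e'; rewrite !inE; apply/eqP/imsetP => [qe' | [a _ ->]]; last exact: actq.
  by have [a [<- _]] := actreg e e' (esym qe'); exists a.
by rewrite (eq_card fibreE) card_imset.
Qed.

Definition sblock_comb {K : fieldType} {M : finType} (S : {set {set M}})
    (c : {set M} -> K) : {ffun M -> K} :=
  \sum_(sig in S) [ffun f => c sig * sblock K sig f].

Lemma scale_sblock_comb {K : fieldType} {M : finType} (S : {set {set M}})
    (a : K) (c : {set M} -> K) :
  [ffun f => a * sblock_comb S c f] = sblock_comb S (fun sig => a * c sig).
Proof.
apply/ffunP => f; rewrite !ffunE !sum_ffunE mulr_sumr.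
by apply: eq_bigr => sig _; rewrite !ffunE mulrA.
Qed.

Lemma eq_sblock_comb {K : fieldType} {M : finType} (S : {set {set M}})
    (c1 c2 : {set M} -> K) :
  {in S, c1 =1 c2} -> sblock_comb S c1 = sblock_comb S c2.
Proof. by move=> eq_c; apply: eq_bigr => sig /eq_c ->. Qed.

Lemma sblock_schemoid_alg (K : fieldType) {M : finType} {S : {set {set M}}}
    {sig : {set M}} : sig \in S -> in_schemoid_alg S (sblock K sig).
Proof.
move=> Ssig; exists (fun tau => (tau == sig)%:R); apply/ffunP => f.
rewrite sum_ffunE (bigD1 sig) //= !ffunE eqxx mul1r big1 ?addr0 // => tau /andP [_].
by rewrite ffunE => /negbTE ->; rewrite mul0r.
Qed.

Section SchemoidExtension.

Context {K : fieldType} {ME M : finType} {q : ME -> M} {S : {set {set M}}} {n : nat}.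
Hypothesis q_surj : forall g, exists e, q e = g.
Hypothesis card_fibre : forall g, #|[pred e | q e == g]| = n.

Lemma sblock_comb_Stilde (c : {set ME} -> K) (e : ME) :
  sblock_comb (Stilde q S) c e = sblock_comb S (fun sig => c (q @^-1: sig)) (q e).
Proof.
rewrite /sblock_comb /Stilde big_imset /=; last by move=> A B _ _; apply: preimset_inj.
by rewrite !sum_ffunE; apply: eq_bigr => sig _; rewrite !ffunE inE.
Qed.

Lemma Kmap_pullback (u : {ffun M -> K}) :
  Kmap q [ffun e => u (q e)] = [ffun g => n%:R * u g].
Proof.
apply/ffunP => g; rewrite !ffunE -(card_fibre g) mulr_natl -sumr_const.
by apply: eq_bigr => e /eqP <-; rewrite ffunE.
Qed.

Lemma Kmap_sblock_comb (c : {set ME} -> K) :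
  Kmap q (sblock_comb (Stilde q S) c)
  = [ffun g => n%:R * sblock_comb S (fun sig => c (q @^-1: sig)) g].
Proof.
rewrite -Kmap_pullback; congr Kmap; apply/ffunP => e.
by rewrite ffunE sblock_comb_Stilde.
Qed.

Lemma Kmap_schemoid_alg (v : {ffun ME -> K}) :
  in_schemoid_alg (Stilde q S) v -> in_schemoid_alg S (Kmap q v).
Proof.
by case=> c ->; rewrite Kmap_sblock_comb scale_sblock_comb; eexists.
Qed.

Lemma Kmap_schemoid_alg_eq0 (v : {ffun ME -> K}) :
  n%:R = 0 :> K -> in_schemoid_alg (Stilde q S) v -> Kmap q v = 0.
Proof.
move=> n0 [c ->]; rewrite Kmap_sblock_comb n0.
by apply/ffunP => g; rewrite !ffunE mul0r.
Qed.

Lemma Kmap_surj_natr_neq0 (g : M) : g \in cover S ->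
  (forall u : {ffun M -> K}, in_schemoid_alg S u ->
     exists2 v, in_schemoid_alg (Stilde q S) v & Kmap q v = u) ->
  n%:R != 0 :> K.
Proof.
move=> /bigcupP [sig Ssig sig_g] Kmap_surj.
have [_ [c ->]] := Kmap_surj _ (sblock_schemoid_alg K Ssig).
rewrite Kmap_sblock_comb => /ffunP /(_ g); rewrite !ffunE sig_g.
by apply: contra_eqN => /eqP ->; rewrite mul0r eq_sym oner_eq0.
Qed.

Hypothesis n_neq0 : n%:R != 0 :> K.

Lemma Kmap_schemoid_alg_inj (v w : {ffun ME -> K}) :
  in_schemoid_alg (Stilde q S) v -> in_schemoid_alg (Stilde q S) w ->
  Kmap q v = Kmap q w -> v = w.
Proof.
case=> [cv ->] [cw ->]; rewrite !Kmap_sblock_comb => /ffunP eq_vw.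
apply/ffunP => e; rewrite !sblock_comb_Stilde; apply: (mulfI n_neq0).
by have := eq_vw (q e); rewrite !ffunE.
Qed.

Lemma Kmap_schemoid_alg_surj (u : {ffun M -> K}) :
  in_schemoid_alg S u -> exists2 v, in_schemoid_alg (Stilde q S) v & Kmap q v = u.
Proof.
case=> c ->; exists (sblock_comb (Stilde q S) (fun tau => n%:R^-1 * c (q @: tau))).
  by eexists.
rewrite Kmap_sblock_comb scale_sblock_comb; apply: eq_sblock_comb => sig _.
by rewrite imset_preimset // mulrA mulfV ?mul1r.
Qed.

End SchemoidExtension.

Theorem corollary6p13
  (* the groupoid C *)
  (O M : finType) (src tgt : M -> O) (id : O -> M) (comp : M -> M -> M)
  (inv : M -> M) (S : {set {set M}}) (Tob : O -> O) (Tmor : M -> M)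
  (* the field K and the functor H : C -> K-Mod, D_g = H (tgt g) *)
  (K : fieldType) (H : O -> finLmodType K)
  (Hmap : forall x y : O, M -> H x -> H y)
  (* the linear extension D_+ -> E -> C *)
  (ME : finType) (srcE tgtE : ME -> O) (idE : O -> ME) (compE : ME -> ME -> ME)
  (q : ME -> M) (act : forall x : O, H x -> ME -> ME)
  (* C is a connected groupoid, (C,S,T) a basic association schemoid, T f = f^-1 *)
  (Ccat : is_category src tgt id comp)
  (Cgrp : is_groupoid_inv src tgt id comp inv)
  (Cconn : cat_connected src tgt)
  (Cas : is_association_schemoid src tgt id comp S Tob Tmor)
  (Cunital : is_unital id S)
  (Tinv : forall f, Tmor f = inv f)
  (Tobj : forall x, Tob x = x)
  (* H is a functor *)
  (Hlin : forall x y f (a : K) (u v : H x),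
            Hmap x y f (a *: u + v) = a *: Hmap x y f u + Hmap x y f v)
  (Hid : forall x (u : H x), Hmap x x (id x) u = u)
  (Hcomp : forall f g, src f = tgt g -> forall u : H (src g),
     Hmap (src g) (tgt f) (comp f g) u = Hmap (tgt g) (tgt f) f (Hmap (src g) (tgt g) g u))
  (* E is a category, q a full functor which is the identity on objects *)
  (Ecat : is_category srcE tgtE idE compE)
  (qsrc : forall e, src (q e) = srcE e)
  (qtgt : forall e, tgt (q e) = tgtE e)
  (qid : forall x, q (idE x) = id x)
  (qcomp : forall e1 e2, srcE e1 = tgtE e2 -> q (compE e1 e2) = comp (q e1) (q e2))
  (qfull : forall f, exists e, [/\ srcE e = src f, tgtE e = tgt f & q e = f])
  (* D_f = H (tgt f) acts on q^{-1}(f) transitively and freely *)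
  (act0 : forall e, act (tgt (q e)) 0 e = e)
  (actD : forall e (a b : H (tgt (q e))),
            act (tgt (q e)) (a + b) e = act (tgt (q e)) a (act (tgt (q e)) b e))
  (actq : forall e (a : H (tgt (q e))), q (act (tgt (q e)) a e) = q e)
  (actreg : forall e e', q e = q e' ->
            exists! a : H (tgt (q e)), act (tgt (q e)) a e = e')
  (* (f0 + alpha)(g0 + beta) = f0 g0 + f_* beta + g^* alpha *)
  (actcomp : forall e1 e2, srcE e1 = tgtE e2 ->
     forall (alpha : H (tgt (q e1))) (beta : H (tgt (q e2))),
       compE (act (tgt (q e1)) alpha e1) (act (tgt (q e2)) beta e2)
       = act (tgt (q e1)) (Hmap (tgt (q e2)) (tgt (q e1)) (q e1) beta + alpha)
             (compE e1 e2)) :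
  (forall v : {ffun ME -> K}, in_schemoid_alg (Stilde q S) v -> in_schemoid_alg S (Kmap q v)) /\
  (((forall v w : {ffun ME -> K}, in_schemoid_alg (Stilde q S) v -> in_schemoid_alg (Stilde q S) w ->
                 Kmap q v = Kmap q w -> v = w) /\
    (forall u : {ffun M -> K}, in_schemoid_alg S u ->
               exists2 v, in_schemoid_alg (Stilde q S) v & Kmap q v = u))
   <-> (forall (g : M) (p : nat), p \in [pchar K] -> ~~ (p %| #|H (tgt g)|)%N)) /\
  ((exists (g : M) (p : nat), p \in [pchar K] /\ (p %| #|H (tgt g)|)%N) ->
     forall v : {ffun ME -> K}, in_schemoid_alg (Stilde q S) v -> Kmap q v = 0).
Proof.
have q_surj g : exists e, q e = g by have [e [_ _ <-]] := qfull g; exists e.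
(* The default 1 only matters for empty [M], where it keeps [n%:R] nonzero. *)
pose n := if [pick g : M] is Some g then #|H (tgt g)| else 1%N.
have card_Htgt g : #|H (tgt g)| = n.
  rewrite /n; case: pickP => [g' _ | /(_ g) //].
  exact: (card_H_connected Cgrp Hid Hcomp Cconn).
have card_fibre g : #|[pred e | q e == g]| = n.
  have [e <-] := q_surj g.
  by rewrite (card_fibre_regular (D := fun x => H x : finType) actq actreg) card_Htgt.
have char_dvd g p : p \in [pchar K] -> (p %| #|H (tgt g)|)%N = (n%:R == 0 :> K).
  by move=> charKp; rewrite card_Htgt (dvdn_pcharf charKp).
have [[/and3P [/eqP coverS _ _] _] _ _ _ _] := Cas.
split; first exact: (Kmap_schemoid_alg q_surj card_fibre).
split; last first.
  move=> [g [p [charKp dvd]]] v; apply: (Kmap_schemoid_alg_eq0 q_surj card_fibre).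
  by apply/eqP; rewrite -(char_dvd g p).
split=> [[_ Kmap_surj] g p charKp | char_ndvd].
  rewrite char_dvd //.
  by apply: (Kmap_surj_natr_neq0 q_surj card_fibre (g := g) _ Kmap_surj); rewrite coverS inE.
have n_neq0 : n%:R != 0 :> K.
  rewrite /n; case: pickP => [g _ | _]; last exact: oner_neq0.
  by apply/natf_neq0_pcharP; [apply/card_gt0P; exists 0 | exact: char_ndvd].
split; first exact: (Kmap_schemoid_alg_inj q_surj card_fibre).
exact: (Kmap_schemoid_alg_surj q_surj card_fibre).
Qed.
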